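(* The subalgebra $\mathcal{B}^{\mp}\subset\mathrm{Y}^{\mp}(2)$ generated by the center $Z\mathrm{Y}^{\mp}(2)$ and all coefficients of the series $\sigma_1(u,F_{11})$ coincides with the subalgebra generated by $Z\mathrm{Y}^{\mp}(2)$ and the elements $s_{11}^{(2m+1)}$, $m\in\mathbb{Z}_{\ge0}$.
   Context: $\mathrm{Y}(2)$ is the algebra generated by $t^{(r)}_{ij}$, $i,j\in\{-1,1\}$, $r\ge1$, with relations $[t^{(r+1)}_{ij},t^{(s)}_{kl}]-[t^{(r)}_{ij},t^{(s+1)}_{kl}]=t^{(r)}_{kj}t^{(s)}_{il}-t^{(s)}_{kj}t^{(r)}_{il}$, $t^{(0)}_{ij}=\delta_{ij}$; $t_{ij}(u)=\sum_{r\ge0}t^{(r)}_{ij}u^{-r}$. In the symplectic case (sign $-$) $\theta_{ij}=\mathrm{sgn}(i)\mathrm{sgn}(j)$, in the orthogonal case (sign $+$) $\theta_{ij}=1$. Put $s_{ij}(u)=\sum_{a\in\{\pm1\}}\theta_{aj}t_{ia}(u)t_{-j,-a}(-u)=\delta_{ij}+\sum_{M\ge1}s^{(M)}_{ij}u^{-M}$; $\mathrm{Y}^{\mp}(2)$ is the subalgebra of $\mathrm{Y}(2)$ generated by all $s^{(M)}_{ij}$, and $Z\mathrm{Y}^{\mp}(2)$ its center. Let $W=\mathbb{C}^2$ with basis $e_{-1},e_1$, $E_{ij}$ the matrix units, transposition $E_{ij}^t=\theta_{ij}E_{-j,-i}$, $S(u)=\sum_{i,j}s_{ij}(u)\otimes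 E_{ij}$, $P=\sum_{i,j}E_{ij}\otimes E_{ji}$, $A_2=\frac12(1-P)$ on $W^{\otimes2}$, $F_{11}=E_{11}-E_{-1,-1}$. Then $\sigma_1(u,F_{11})=\mathrm{tr}\big[A_2\, S_1(u)\,\big(1-\tfrac{1}{3-2u}\sum_{i,j}E^t_{ij}\otimes E_{ji}\big)\,(F_{11})_2\big]$, where $S_1(u)$ acts on the first and $(F_{11})_2$ on the second tensor factor, the trace is over $W^{\otimes 2}$, and $\sigma_1$ is expanded as a series in $u^{-1}$ with coefficients in $\mathrm{Y}^{\mp}(2)$ (this $\mathcal{B}^{\mp}$ is the Bethe subalgebra for $C=F_{11}$). *)

From HB Require Import structures.
From mathcomp Require Import all_boot all_order all_algebra.
From mathcomp Require Import reals complex.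
Set Implicit Arguments. Unset Strict Implicit. Unset Printing Implicit Defensive.
Import Order.TTheory GRing.Theory Num.Theory.
Local Open Scope ring_scope.

(* Index set {-1, 1} of the basis e_{-1}, e_1 of W = C^2:
   [false] stands for -1 and [true] stands for 1. *)
Definition idx := bool.
Definition ineg (i : idx) : idx := ~~ i.

Section Yangian.
Variable K : fieldType.

Definition sgn (i : idx) : K := if i then 1 else -1.

(* theta_{ij}: symplectic case (symp = true, sign -) sgn(i)sgn(j);
   orthogonal case (symp = false, sign +) 1. *)
Definition theta (symp : bool) (i j : idx) : K :=
  if symp then sgn i * sgn j else 1.

Variable A : algType K.

Definition is_subalg (P : A -> Prop) : Prop :=
  [/\ P 1, (forall x y, P x -> P y -> P (x + y)),
      (forall (c : K) x, P x -> P (c *: x)) &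
      (forall x y, P x -> P y -> P (x * y))].

Definition gen_alg (G : A -> Prop) (x : A) : Prop :=
  forall P : A -> Prop, is_subalg P -> (forall y, G y -> P y) -> P x.

(* Given the generators t r i j for r >= 1 (the value at r = 0 is ignored),
   tfull r i j is t^{(r)}_{ij} with the convention t^{(0)}_{ij} = delta_{ij}. *)
Definition tfull (t : nat -> idx -> idx -> A) (r : nat) (i j : idx) : A :=
  if r is 0 then (i == j)%:R else t r i j.

Definition yangian_rel (t : nat -> idx -> idx -> A) : Prop :=
  forall (r s : nat) (i j k l : idx),
    let T := tfull t in
    (T r.+1 i j * T s k l - T s k l * T r.+1 i j)
      - (T r i j * T s.+1 k l - T s.+1 k l * T r i j)
    = T r k j * T s i l - T s k j * T r i l.

End Yangian.

Definition alg_morph (K : fieldType) (A B : algType K) (f : A -> B) : Prop :=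
  [/\ forall (c : K) (x y : A), f (c *: x + y) = c *: f x + f y,
      forall x y : A, f (x * y) = f x * f y &
      f 1 = 1].

(* (A, t) is (isomorphic to) the Yangian Y(2) over K: the t^{(r)}_{ij} (r >= 1)
   satisfy the defining relations, generate A, and A has the universal property
   of the algebra presented by these generators and relations. *)
Definition is_Yangian2 (K : fieldType) (A : algType K)
    (t : nat -> idx -> idx -> A) : Prop :=
  [/\ yangian_rel t,
      (forall x : A, gen_alg (fun y => exists r i j, (0 < r)%N /\ y = t r i j) x) &
      (forall (B : algType K) (tau : nat -> idx -> idx -> B), yangian_rel tau ->
         exists f : A -> B, alg_morph f /\
           (forall r i j, (0 < r)%N -> f (t r i j) = tau r i j))].

Section Twisted.
Variables (K : fieldType) (A : algType K) (symp : bool).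
Variable t : nat -> idx -> idx -> A.
Local Notation T := (tfull t).
Local Notation th := (@theta K symp).

(* s^{(M)}_{ij}: coefficient of u^{-M} in
   s_{ij}(u) = sum_a theta_{aj} t_{ia}(u) t_{-j,-a}(-u). *)
Definition scoef (M : nat) (i j : idx) : A :=
  \sum_(a : idx) th a j *:
     \sum_(r < M.+1) ((-1) ^+ (M - r)) *: (T r i a * T (M - r) (ineg j) (ineg a)).

Definition twY (x : A) : Prop :=
  gen_alg (fun y => exists M i j, (0 < M)%N /\ y = scoef M i j) x.

Definition center_twY (z : A) : Prop :=
  twY z /\ forall y, twY y -> z * y = y * z.

(* Operators on W (x) W; indices of W (x) W are pairs (first, second factor).
   An operator X has matrix entries X x y (row x, column y). *)
Definition Pop (x y : idx * idx) : K := ((x.1 == y.2) && (x.2 == y.1))%:R.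
Definition A2op (x y : idx * idx) : K := ((x == y)%:R - Pop x y) / 2.
(* sum_{i,j} E^t_{ij} (x) E_{ji} with E^t_{ij} = theta_{ij} E_{-j,-i} *)
Definition Qop (x y : idx * idx) : K :=
  if (x.1 == ineg x.2) && (y.1 == ineg y.2) then th y.2 x.2 else 0.
(* (F_{11})_2, F_{11} = E_{11} - E_{-1,-1} *)
Definition F2op (x y : idx * idx) : K := if x == y then sgn K y.2 else 0.
(* coefficient of u^{-k} of S_1(u) = sum_{ij} s_{ij}(u) (x) E_{ij} (x) 1 *)
Definition S1op (k : nat) (x y : idx * idx) : A :=
  if x.2 == y.2 then scoef k x.1 y.1 else 0.
(* coefficients (of u^{-k}) of the expansion of 1/(3-2u) in u^{-1}:
   1/(3-2u) = - sum_{k>=0} (3/2)^k / 2 * u^{-k-1}. *)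
Definition inv3m2u (k : nat) : K :=
  if k is k'.+1 then - ((3%:R / 2%:R) ^+ k' / 2%:R) else 0.
(* coefficient of u^{-k} of 1 - 1/(3-2u) sum_{ij} E^t_{ij} (x) E_{ji} *)
Definition Midop (k : nat) (x y : idx * idx) : K :=
  ((x == y) && (k == 0)%N)%:R - inv3m2u k * Qop x y.

(* coefficient of u^{-n} of
   sigma_1(u, F_11) = tr[A_2 S_1(u) (1 - 1/(3-2u) sum E^t_{ij} (x) E_{ji}) (F_11)_2]. *)
Definition sigma1 (n : nat) : A :=
  \sum_(x : idx * idx) \sum_(y : idx * idx) \sum_(z : idx * idx) \sum_(w : idx * idx)
    \sum_(k < n.+1) (A2op x y * Midop (n - k) z w * F2op w x) *: S1op k y z.

End Twisted.

(* Put D_n := s_11^{(n)} - s_{-1,-1}^{(n)}. In the trace defining sigma_1 the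
   off-diagonal entries of S(u) cancel and the diagonal ones enter only through
   their difference, so sigma_1^{(n)} = sum_{k <= n} w(n - k) D_k with w(0) = -1/2:
   this triangular system shows that the sigma_1^{(n)} and the D_n generate the
   same subalgebra. Specialising the defining relation of Y(2) to v = -u gives
     2 (s_jj^{(N+1)} + (-1)^N s_{-j,-j}^{(N+1)}) = theta_{1,-1} (1 - (-1)^N) s_{-j,-j}^{(N)},
   hence s_{-1,-1}^{(n)} = - s_11^{(n)} for odd n, so D_{2m+1} = 2 s_11^{(2m+1)}
   and D_{2m+2} = - theta_{1,-1} s_11^{(2m+1)}. *)

From HB Require Import structures.
From mathcomp Require Import all_boot all_order all_algebra.
From mathcomp Require Import reals complex.
From mathcomp Require Import ring.
Set Implicit Arguments. Unset Strict Implicit. Unset Printing Implicit Defensive.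
Import GRing.Theory Num.Theory.
Local Open Scope ring_scope.

Section GeneratedSubalgebra.
Variables (K : fieldType) (A : algType K).
Implicit Types (G H : A -> Prop) (x y : A).

Lemma gen_alg_subalg G : is_subalg (gen_alg G).
Proof.
split=> [P [] // | x y Gx Gy P PA PG | c x Gx P PA PG | x y Gx Gy P PA PG];
  have [_ PD PZ PM] := PA.
- exact: PD (Gx P PA PG) (Gy P PA PG).
- exact: PZ (Gx P PA PG).
- exact: PM (Gx P PA PG) (Gy P PA PG).
Qed.

Lemma gen_alg_gen G y : G y -> gen_alg G y.
Proof. by move=> Gy P _; apply. Qed.

Lemma gen_alg_sub G H x :
  (forall y, G y -> gen_alg H y) -> gen_alg G x -> gen_alg H x.
Proof. by move=> sGH /(_ _ (gen_alg_subalg H)); apply. Qed.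

Lemma gen_algZ G c x : gen_alg G x -> gen_alg G (c *: x).
Proof. by have [_ _ ZG _] := gen_alg_subalg G; apply: ZG. Qed.

Lemma gen_alg0 G : gen_alg G 0.
Proof. by rewrite -(scale0r 1); apply: gen_algZ; case: (gen_alg_subalg G). Qed.

Lemma gen_algD G x y : gen_alg G x -> gen_alg G y -> gen_alg G (x + y).
Proof. by have [_ DG _ _] := gen_alg_subalg G; apply: DG. Qed.

Lemma gen_algB G x y : gen_alg G x -> gen_alg G y -> gen_alg G (x - y).
Proof. by move=> Gx Gy; rewrite -scaleN1r; apply: gen_algD => //; apply: gen_algZ. Qed.

Lemma gen_alg_sum G (I : Type) (r : seq I) (P : pred I) (F : I -> A) :
  (forall i, P i -> gen_alg G (F i)) -> gen_alg G (\sum_(i <- r | P i) F i).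
Proof. by move=> GF; apply: big_ind => //; [exact: gen_alg0 | exact: gen_algD]. Qed.

Lemma gen_alg_triangular G (g : nat -> K) (d s : nat -> A) :
  g 0%N != 0 -> (forall n, s n = \sum_(k < n.+1) g (n - k)%N *: d k) ->
  (forall n, G (s n)) -> forall n, gen_alg G (d n).
Proof.
move=> g0_neq0 sE Gs; elim/ltn_ind=> n IHn.
have -> : d n = (g 0%N)^-1 *: (s n - \sum_(k < n) g (n - k)%N *: d k).
  by rewrite sE big_ord_recr /= subnn addrAC subrr add0r scalerA mulVf // scale1r.
apply: gen_algZ; apply: gen_algB; first exact: gen_alg_gen.
by apply: gen_alg_sum => k _; apply: gen_algZ; exact: IHn.
Qed.

End GeneratedSubalgebra.

Lemma sign_subn (R : pzRingType) (r N : nat) : (r <= N)%N ->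
  (-1) ^+ N * (-1) ^+ (N - r) = (-1) ^+ r :> R.
Proof.
move=> le_rN; rewrite -{1}(subnKC le_rN) exprD -mulrA -exprD addnn -mul2n.
by rewrite exprM sqrrN !expr1n mulr1.
Qed.

Lemma sum_alt_antidiagonal_shift (R : pzRingType) (V : lmodType R) (c : nat -> nat -> V) N :
  (forall s, c 0%N s = 0) -> (forall r, c r 0%N = 0) ->
  \sum_(r < N.+1) (-1) ^+ (N - r) *: (c r.+1 (N - r)%N - c r (N - r)%N.+1)
  = 2%:R *: \sum_(r < N.+2) (-1) ^+ (N.+1 - r) *: c r (N.+1 - r)%N.
Proof.
move=> c0s cr0; under eq_bigr do rewrite scalerBr; rewrite sumrB.
have -> : \sum_(r < N.+1) (-1) ^+ (N - r) *: c r.+1 (N - r)%N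
          = \sum_(r < N.+2) (-1) ^+ (N.+1 - r) *: c r (N.+1 - r)%N.
  by rewrite [RHS]big_ord_recl c0s scaler0 add0r.
have -> : \sum_(r < N.+1) (-1) ^+ (N - r) *: c r (N - r)%N.+1
          = - \sum_(r < N.+2) (-1) ^+ (N.+1 - r) *: c r (N.+1 - r)%N.
  rewrite [in RHS]big_ord_recr /= subnn cr0 scaler0 addr0 -sumrN.
  apply: eq_bigr => r _; have le_rN : (r <= N)%N by rewrite -ltnS.
  by rewrite subSn // exprS mulN1r scaleNr opprK.
by rewrite opprK scaler_nat mulr2n.
Qed.

Section YangianRelation.
Variables (K : fieldType) (A : algType K) (t : nat -> idx -> idx -> A).
Local Notation T := (tfull t).

(* the coefficient of u^{-N} in t_ij(u) t_kl(-u), so that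
   s_ij^{(N)} = sum_a theta_aj tconv i a (-j) (-a) N *)
Definition tconv (i j k l : idx) (N : nat) : A :=
  \sum_(r < N.+1) (-1) ^+ (N - r) *: (T r i j * T (N - r) k l).

Lemma tconv_rev i j k l N :
  (-1) ^+ N *: tconv k l i j N = \sum_(r < N.+1) (-1) ^+ (N - r) *: (T (N - r) k l * T r i j).
Proof.
rewrite scaler_sumr -(big_mkord xpredT (fun r => (-1) ^+ (N - r) *: (T (N - r) k l * T r i j))).
rewrite big_nat_rev big_mkord; apply: eq_bigr => r _.
have le_rN : (r <= N)%N by rewrite -ltnS.
by rewrite add0n subSS subKn // scalerA sign_subn.
Qed.

Hypothesis rel : yangian_rel t.

Lemma tconv_comm_rel i j k l N :
  2%:R *: (tconv i j k l N.+1 - (-1) ^+ N.+1 *: tconv k l i j N.+1)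
  = (1 - (-1) ^+ N) *: tconv k j i l N.
Proof.
pose c r s := T r i j * T s k l - T s k l * T r i j.
have -> : tconv i j k l N.+1 - (-1) ^+ N.+1 *: tconv k l i j N.+1
          = \sum_(r < N.+2) (-1) ^+ (N.+1 - r) *: c r (N.+1 - r)%N.
  by rewrite tconv_rev /tconv -sumrB; apply: eq_bigr => r _; rewrite scalerBr.
rewrite -sum_alt_antidiagonal_shift => [|s|r]; try by rewrite /c /= mulr_natl mulr_natr subrr.
under eq_bigr => r _ do rewrite [c _ _ - _](rel r (N - r)%N i j k l).
rewrite scalerBl scale1r tconv_rev /tconv -sumrB.
by apply: eq_bigr => r _; rewrite scalerBr.
Qed.

End YangianRelation.

Section TwistedDiagonal.
Variables (K : fieldType) (A : algType K) (symp : bool) (t : nat -> idx -> idx -> A).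
Local Notation s := (scoef symp t).
Local Notation th := (theta K symp true false).

Lemma theta_offdiag_sqr : th * th = 1.
Proof. by rewrite /theta /sgn; case: symp; rewrite ?mul1r ?mulrNN ?mulr1. Qed.

Lemma scoef_diagE j N :
  s N j j = tconv t j j (ineg j) (ineg j) N + th *: tconv t j (ineg j) (ineg j) j N.
Proof.
rewrite /scoef /tconv big_bool /theta /sgn; case: j; case: symp;
  by rewrite /= ?mulrNN ?mul1r ?mulr1 ?scale1r // addrC.
Qed.

Lemma scoef0_diag j : s 0%N j j = 1.
Proof.
by rewrite scoef_diagE /tconv !big_ord1; case: j; rewrite /= !scale1r mulr1 mulr0 scaler0 addr0.
Qed.

Hypothesis rel : yangian_rel t.

Lemma scoef_diag_rel j N :
  2%:R *: (s N.+1 j j - (-1) ^+ N.+1 *: s N.+1 (ineg j) (ineg j))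
  = th *: ((1 - (-1) ^+ N) *: s N (ineg j) (ineg j)).
Proof.
rewrite !scoef_diagE /ineg negbK.
have h1 := tconv_comm_rel rel j j (~~ j) (~~ j) N.
have h2 := tconv_comm_rel rel j (~~ j) (~~ j) j N.
set sg := (-1) ^+ N.+1 in h1 h2 *; set c := 1 - (-1) ^+ N in h1 h2 *.
set p1 := tconv t j j _ _ N.+1 in h1 *; set q1 := tconv t (~~ j) (~~ j) _ _ N.+1 in h1 *.
set p2 := tconv t j (~~ j) _ _ N.+1 in h2 *; set q2 := tconv t (~~ j) j _ _ N.+1 in h2 *.
have -> : p1 + th *: p2 - sg *: (q1 + th *: q2) = (p1 - sg *: q1) + th *: (p2 - sg *: q2).
  by rewrite !scalerDr !scalerN !scalerA mulrC opprD addrACA.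
rewrite scalerDr h1 scalerA mulrC -scalerA h2 addrC !scalerDr; congr (_ + _).
by rewrite !scalerA mulrAC theta_offdiag_sqr mul1r.
Qed.

Hypothesis two_neq0 : (2%:R : K) != 0.

Lemma scoef_diag_odd j n : odd n -> s n (ineg j) (ineg j) = - s n j j.
Proof.
case: n => // n; rewrite oddS => even_n; have := scoef_diag_rel j n.
rewrite -[(-1) ^+ n.+1]signr_odd -[(-1) ^+ n]signr_odd /= (negbTE even_n).
rewrite expr0 expr1 subrr scale0r scaler0 scaleN1r opprK => /eqP.
by rewrite scaler_eq0 (negbTE two_neq0) /= addrC addr_eq0 => /eqP.
Qed.

Lemma scoef_diag_even j n : odd n ->
  s n.+1 j j - s n.+1 (ineg j) (ineg j) = - th *: s n j j.
Proof.
move=> odd_n; have := scoef_diag_rel j n.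
rewrite -[(-1) ^+ n.+1]signr_odd -[(-1) ^+ n]signr_odd /= odd_n.
rewrite expr0 expr1 scale1r opprK -mulr2n (scoef_diag_odd j odd_n) => sE.
by apply: (scalerI two_neq0); rewrite sE !scalerA scalerN -scaleNr mulrN mulrC.
Qed.

Definition sdiff n := s n true true - s n false false.

Lemma sdiff_odd n : odd n -> sdiff n = 2%:R *: s n true true.
Proof.
by move=> odd_n; rewrite /sdiff (scoef_diag_odd true odd_n) opprK scaler_nat mulr2n.
Qed.

Lemma sdiff_gen G : (forall m, G (s m.*2.+1 true true)) -> forall n, gen_alg G (sdiff n).
Proof.
move=> Gs [|n]; first by rewrite /sdiff !scoef0_diag subrr; apply: gen_alg0.
have [odd_n | even_n] := boolP (odd n).
- rewrite /sdiff (scoef_diag_even true odd_n).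
  have -> : n = (n./2).*2.+1 by rewrite -[in LHS](odd_double_half n) odd_n.
  by apply: gen_algZ; apply: gen_alg_gen.
- rewrite sdiff_odd ?oddS //.
  have -> : n = (n./2).*2 by rewrite even_halfK.
  by apply: gen_algZ; apply: gen_alg_gen.
Qed.

End TwistedDiagonal.

Lemma sum_pair (V : nmodType) (I J : finType) (F : I * J -> V) :
  \sum_p F p = \sum_i \sum_j F (i, j).
Proof. by rewrite pair_bigA; apply: eq_bigr => -[]. Qed.

Section Sigma1.
Variables (K : fieldType) (A : algType K) (symp : bool) (t : nat -> idx -> idx -> A).
Local Notation s := (scoef symp t).

Definition sigma1_coef m (y z : idx * idx) : K :=
  \sum_x \sum_w A2op K x y * Midop K symp m z w * F2op K w x.

Definition sigma1_weight m : K :=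
  sigma1_coef m (true, true) (true, true) + sigma1_coef m (true, false) (true, false).

Lemma sigma1E n :
  sigma1 symp t n = \sum_(k < n.+1) \sum_y \sum_z sigma1_coef (n - k) y z *: S1op symp t k y z.
Proof.
rewrite /sigma1.
under eq_bigr => x _ do under eq_bigr => y _ do under eq_bigr => z _ do rewrite exchange_big.
under eq_bigr => x _ do under eq_bigr => y _ do rewrite exchange_big.
under eq_bigr => x _ do rewrite exchange_big.
rewrite exchange_big; apply: eq_bigr => k _.
rewrite exchange_big; apply: eq_bigr => y _.
rewrite exchange_big; apply: eq_bigr => z _.
by rewrite scaler_suml; apply: eq_bigr => x _; rewrite scaler_suml.
Qed.

Lemma sum_S1op (c : idx * idx -> idx * idx -> K) k :
  \sum_y \sum_z c y z *: S1op symp t k y z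
  = \sum_i \sum_j (\sum_b c (i, b) (j, b)) *: s k i j.
Proof.
rewrite sum_pair; apply: eq_bigr => i _.
under eq_bigr do rewrite sum_pair.
rewrite exchange_big /=; apply: eq_bigr => j _.
rewrite scaler_suml; apply: eq_bigr => b _.
by rewrite big_bool /S1op; case: b => /=; rewrite scaler0 ?addr0 ?add0r.
Qed.

Hypothesis two_neq0 : (2%:R : K) != 0.

Lemma sigma1_coef_diag m i j :
  \sum_b sigma1_coef m (i, b) (j, b) = (i == j)%:R * sgn K i * sigma1_weight m.
Proof.
rewrite /sigma1_weight /sigma1_coef big_bool; do 2 rewrite !sum_pair !big_bool.
by rewrite /A2op /Pop /Midop /Qop /F2op /theta /sgn; case: i; case: j; case: symp => /=; field.
Qed.

Lemma sigma1_weight0 : sigma1_weight 0 = - 2%:R^-1.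
Proof.
rewrite /sigma1_weight /sigma1_coef; do 2 rewrite !sum_pair !big_bool.
by rewrite /A2op /Pop /Midop /Qop /F2op /theta /sgn; case: symp => /=; field.
Qed.

Lemma sigma1_sdiff n : sigma1 symp t n = \sum_(k < n.+1) sigma1_weight (n - k) *: sdiff symp t k.
Proof.
rewrite sigma1E; apply: eq_bigr => k _; rewrite sum_S1op.
under eq_bigr do under eq_bigr do rewrite sigma1_coef_diag.
rewrite !big_bool /= /sgn !mul0r !scale0r addr0 add0r !mul1r mulN1r scaleNr.
by rewrite scalerBr.
Qed.

End Sigma1.

Unset Implicit Arguments.

Theorem proposition3 (R : realType) (symp : bool) (A : algType R[i])
    (t : nat -> idx -> idx -> A) (HY : is_Yangian2 t) :
  forall x : A,
    gen_alg (fun y => center_twY symp t y \/ exists n : nat, y = sigma1 symp t n) x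
    <->
    gen_alg (fun y => center_twY symp t y \/ exists m : nat, y = scoef symp t m.*2.+1 true true) x.
Proof.
have two_neq0 : (2%:R : R[i]) != 0 by rewrite pnatr_eq0.
have [rel _ _] := HY.
move=> x; split; apply: gen_alg_sub => y [central_y | [n ->]];
  try by apply: gen_alg_gen; left.
- rewrite sigma1_sdiff //; apply: gen_alg_sum => k _; apply: gen_algZ.
  by apply: sdiff_gen => // m; right; exists m.
- have -> : scoef symp t n.*2.+1 true true = 2%:R^-1 *: sdiff symp t n.*2.+1.
    have odd_2n1 : odd n.*2.+1 by rewrite oddS odd_double.
    by rewrite (sdiff_odd symp rel two_neq0 odd_2n1) scalerA mulVf ?scale1r.
  apply: gen_algZ; apply: (gen_alg_triangular (g := sigma1_weight _ symp)).
  + by rewrite sigma1_weight0 // oppr_eq0 invr_eq0.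
  + exact: sigma1_sdiff.
  + by move=> m; right; exists m.
Qed.
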